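(* Let $1<p<\infty$ and define $f:\mathbb{R}^2\to\mathbb{R}$ by $$f(x,y)=|x+y|^p-|x|^p-yp|x|^{p-1}\operatorname{sign}(x).$$ Then: (a) there is a constant $\Lambda>2$ such that $f(x,2y)\ge\Lambda f(x,y)$ for all $x,y\in\mathbb{R}$; (b) there is a constant $T>0$ such that $f(x,2y)\le Tf(x,y)$ for all $x,y\in\mathbb{R}$; (c) there is a constant $K>0$ such that $f(x,y)\le Kf(x,-y)$ for all $x,y\in\mathbb{R}$. *)

From Stdlib Require Import Reals Lra.
Open Scope R_scope.

(* |x|^a for real exponent a > 0, with the convention 0^a = 0
   (Stdlib's Rpower 0 a = exp (a * ln 0) = 1, so we special-case 0). *)
Definition abspow (x a : R) : R :=
  if Req_EM_T x 0 then 0 else Rpower (Rabs x) a.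

Definition sgn (x : R) : R :=
  if Rlt_dec 0 x then 1 else if Rlt_dec x 0 then -1 else 0.

Definition fp (p x y : R) : R :=
  abspow (x + y) p - abspow x p - y * p * abspow x (p - 1) * sgn x.

From Stdlib Require Import Reals Lra Lia.
From Coquelicot Require Import Coquelicot.
Open Scope R_scope.

(* With q = p - 1 and the signed power spow q u = |u|^q sign u, the y-derivative of
   f(x, y) is p (spow q (x + y) - spow q x).  By homogeneity, (a - b)(spow q a - spow q b)
   is comparable to (a - b)^2 max(|a|, |b|)^(q - 1), and for the pairs of points that are
   compared the two maxima differ by a factor at most 5.  Each inequality has the form
   H(y) = al f(x, ga y) - be f(x, de y) >= 0 with H(0) = H'(0) = 0, so by the mean value
   theorem it suffices that y H'(y) >= 0, which the comparison yields with explicit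
   constants. *)

Definition spow (q u : R) : R := abspow u q * sgn u.

Lemma abspow_pos u a : 0 < u -> abspow u a = Rpower u a.
Proof.
  intro Hu. unfold abspow. destruct (Req_EM_T u 0); [lra|].
  now rewrite Rabs_right by lra.
Qed.

Lemma abspow_neg u a : u < 0 -> abspow u a = Rpower (- u) a.
Proof.
  intro Hu. unfold abspow. destruct (Req_EM_T u 0); [lra|].
  now rewrite Rabs_left by lra.
Qed.

Lemma abspow_0 a : abspow 0 a = 0.
Proof. unfold abspow. destruct (Req_EM_T 0 0); lra. Qed.

Lemma sgn_pos u : 0 < u -> sgn u = 1.
Proof. intro Hu. unfold sgn. destruct (Rlt_dec 0 u); lra. Qed.

Lemma sgn_neg u : u < 0 -> sgn u = -1.
Proof.
  intro Hu. unfold sgn.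
  destruct (Rlt_dec 0 u); [lra|]. destruct (Rlt_dec u 0); lra.
Qed.

Lemma Rpower_gt0 x a : 0 < Rpower x a.
Proof. apply exp_pos. Qed.

Lemma Rpower_1_l a : Rpower 1 a = 1.
Proof. unfold Rpower. now rewrite ln_1, Rmult_0_r, exp_0. Qed.

Lemma spow_pos q u : 0 < u -> spow q u = Rpower u q.
Proof. intro Hu. unfold spow. rewrite abspow_pos, sgn_pos; lra. Qed.

Lemma spow_neg q u : u < 0 -> spow q u = - Rpower (- u) q.
Proof. intro Hu. unfold spow. rewrite abspow_neg, sgn_neg; lra. Qed.

Lemma spow_0 q : spow q 0 = 0.
Proof. unfold spow. rewrite abspow_0. lra. Qed.

Lemma spow_opp q u : spow q (- u) = - spow q u.
Proof.
  destruct (Rtotal_order u 0) as [Hu|[->|Hu]].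
  - rewrite spow_pos, spow_neg by lra. lra.
  - now rewrite Ropp_0, spow_0, Ropp_0.
  - rewrite spow_neg, spow_pos by lra. now rewrite Ropp_involutive.
Qed.

Lemma spow_scale q a u : 0 < a -> spow q (a * u) = Rpower a q * spow q u.
Proof.
  intro Ha. destruct (Rtotal_order u 0) as [Hu|[->|Hu]].
  - rewrite !spow_neg by nra. replace (- (a * u)) with (a * - u) by ring.
    rewrite <- Rpower_mult_distr by lra. ring.
  - rewrite Rmult_0_r, spow_0. ring.
  - rewrite !spow_pos by nra. now rewrite Rpower_mult_distr by lra.
Qed.

Lemma Rpower_le_exp_lt1 x a b : 0 < x < 1 -> a <= b -> Rpower x b <= Rpower x a.
Proof.
  intros Hx Hab. unfold Rpower.
  assert (ln x < 0) by (rewrite <- ln_1; apply ln_increasing; lra).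
  destruct Hab as [Hab| ->]; [|lra].
  left. apply exp_increasing. nra.
Qed.

Lemma one_sub_pow_le (n : nat) b : 0 <= b <= 1 -> 1 - b ^ n <= INR n * (1 - b).
Proof.
  intro Hb. induction n as [|n IH]; [simpl; lra|].
  rewrite S_INR. simpl.
  assert (b ^ n <= 1) by (rewrite <- (pow1 n); apply pow_incr; lra).
  assert (0 <= b ^ n) by (apply pow_le; lra).
  nra.
Qed.

Lemma one_sub_Rpower_bounds q (n : nat) b : 0 < q -> q <= INR n -> / INR n <= q -> 0 < b <= 1 ->
  (1 - b) / INR n <= 1 - Rpower b q <= INR n * (1 - b).
Proof.
  intros Hq Hqn Hnq Hb.
  assert (Hn : 0 < INR n).
  { destruct n; [simpl in *; lra | apply lt_0_INR; lia]. }
  destruct (Req_dec b 1) as [->|Hb1].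
  { rewrite Rpower_1_l. replace (1 - 1) with 0 by ring. unfold Rdiv. lra. }
  split.
  - set (r := Rpower b (/ INR n)).
    assert (Hr : r ^ n = b).
    { unfold r. rewrite <- Rpower_pow by apply Rpower_gt0.
      rewrite Rpower_mult, Rinv_l by lra. apply Rpower_1; lra. }
    assert (Hr1 : r <= 1).
    { unfold r. rewrite <- (Rpower_O b) by lra.
      apply Rpower_le_exp_lt1; [lra|]. left; apply Rinv_0_lt_compat; lra. }
    assert (Hqr : Rpower b q <= r) by (apply Rpower_le_exp_lt1; lra).
    pose proof (one_sub_pow_le n r (conj (Rlt_le _ _ (Rpower_gt0 _ _)) Hr1)) as Hpow.
    rewrite Hr in Hpow.
    apply Rmult_le_reg_l with (INR n); [lra|]. field_simplify; nra.
  - assert (b ^ n <= Rpower b q).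
    { rewrite <- Rpower_pow by lra. apply Rpower_le_exp_lt1; lra. }
    pose proof (one_sub_pow_le n b ltac:(lra)). lra.
Qed.

Lemma one_sub_spow_comparable q : 0 < q -> exists c C, 0 < c /\ 0 < C /\
  forall b, -1 <= b <= 1 -> c * (1 - b) <= 1 - spow q b <= C * (1 - b).
Proof.
  intro Hq. destruct (INR_unbounded (Rmax 1 (Rmax q (/ q)))) as [n Hn].
  pose proof (Rmax_l 1 (Rmax q (/ q))). pose proof (Rmax_r 1 (Rmax q (/ q))).
  pose proof (Rmax_l q (/ q)). pose proof (Rmax_r q (/ q)).
  assert (Hnq : / INR n <= q).
  { rewrite <- (Rinv_inv q). apply Rinv_le_contravar; [apply Rinv_0_lt_compat|]; lra. }
  exists (/ (2 * INR n)), (2 * INR n).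
  assert (Hc : / (2 * INR n) <= / 2) by (apply Rinv_le_contravar; lra).
  assert (Hc0 : 0 < / (2 * INR n)) by (apply Rinv_0_lt_compat; lra).
  split; [lra|]. split; [lra|].
  intros b Hb. destruct (Rle_lt_dec b 0) as [Hb0|Hb0].
  - assert (Hsb : - 1 <= spow q b <= 0).
    { destruct Hb0 as [Hb0| ->]; [|rewrite spow_0; lra].
      rewrite spow_neg by lra. pose proof (Rpower_gt0 (- b) q).
      enough (Rpower (- b) q <= 1) by lra.
      destruct (Req_dec b (-1)) as [->|]; [replace (- -1) with 1 by ring; rewrite Rpower_1_l; lra|].
      rewrite <- (Rpower_O (- b)) by lra. apply Rpower_le_exp_lt1; lra. }
    assert (/ (2 * INR n) * (1 - b) <= / 2 * 2) by (apply Rmult_le_compat; lra).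
    assert (1 <= INR n * (1 - b)) by nra.
    lra.
  - rewrite spow_pos by lra.
    destruct (one_sub_Rpower_bounds q n b) as [Hlo Hhi]; try lra.
    assert (0 < / INR n) by (apply Rinv_0_lt_compat; lra).
    unfold Rdiv in Hlo. rewrite Rinv_mult. split; nra.
Qed.

Definition secant_weight (q a b : R) : R := Rpower (Rmax (Rabs a) (Rabs b)) (q - 1).

Definition secant_bounds (q c C a b : R) : Prop :=
  c * (a - b) ^ 2 * secant_weight q a b <= (a - b) * (spow q a - spow q b)
  <= C * (a - b) ^ 2 * secant_weight q a b.

Lemma secant_bounds_sym q c C a b : secant_bounds q c C a b -> secant_bounds q c C b a.
Proof.
  unfold secant_bounds, secant_weight. rewrite Rmax_comm.
  replace ((b - a) ^ 2) with ((a - b) ^ 2) by ring.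
  replace ((b - a) * (spow q b - spow q a)) with ((a - b) * (spow q a - spow q b)) by ring.
  easy.
Qed.

Lemma secant_bounds_opp q c C a b : secant_bounds q c C (- a) (- b) -> secant_bounds q c C a b.
Proof.
  unfold secant_bounds, secant_weight. rewrite !Rabs_Ropp, !spow_opp.
  replace ((- a - - b) ^ 2) with ((a - b) ^ 2) by ring.
  replace ((- a - - b) * (- spow q a - - spow q b)) with ((a - b) * (spow q a - spow q b)) by ring.
  easy.
Qed.

Section SecantBounds.

Variables q c C : R.
Hypothesis one_sub_spow_bounds :
  forall b, -1 <= b <= 1 -> c * (1 - b) <= 1 - spow q b <= C * (1 - b).

(* Homogeneity: writing b = a t, both sides scale by a^2 a^(q-1) (1 - t). *)
Lemma secant_bounds_normalized a b : 0 < a -> Rabs b <= a -> secant_bounds q c C a b.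
Proof.
  intros Ha Hb. set (t := b / a).
  assert (Eb : b = a * t) by (unfold t; field; lra).
  assert (Ht : -1 <= t <= 1) by (apply Rabs_le_between in Hb; rewrite Eb in Hb; split; nra).
  assert (Ew : secant_weight q a b = Rpower a (q - 1)).
  { unfold secant_weight. rewrite (Rabs_right a), Rmax_left; lra. }
  set (w := Rpower a (q - 1)) in Ew.
  assert (Ea : spow q a = w * a).
  { rewrite spow_pos by lra. unfold w.
    replace q with ((q - 1) + 1) at 1 by ring. now rewrite Rpower_plus, Rpower_1. }
  assert (Eq : Rpower a q = w * a) by (rewrite <- Ea, spow_pos; lra).
  assert (Hw : 0 < w) by apply Rpower_gt0.
  assert (HX : 0 <= a * a * w * (1 - t)) by (apply Rmult_le_pos; [|lra]; nra).
  unfold secant_bounds. rewrite Ew, Ea, Eb, spow_scale, Eq by lra.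
  destruct (one_sub_spow_bounds t Ht) as [Hlo Hhi].
  replace ((a - a * t) * (w * a - w * a * spow q t)) with (a * a * w * (1 - t) * (1 - spow q t))
    by ring.
  replace (c * (a - a * t) ^ 2 * w) with (a * a * w * (1 - t) * (c * (1 - t))) by ring.
  replace (C * (a - a * t) ^ 2 * w) with (a * a * w * (1 - t) * (C * (1 - t))) by ring.
  split; apply Rmult_le_compat_l; assumption.
Qed.

Lemma secant_bounds_abs_le a b : Rabs b <= Rabs a -> secant_bounds q c C a b.
Proof.
  intro Hba. destruct (Rtotal_order a 0) as [Ha|[Ha|Ha]].
  - apply secant_bounds_opp, secant_bounds_normalized; rewrite ?Rabs_Ropp, ?(Rabs_left a) in *; lra.
  - subst. rewrite Rabs_R0 in Hba. assert (b = 0) by (pose proof (Rabs_pos b); apply Rabs_eq_0; lra).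
    subst. unfold secant_bounds. rewrite Rminus_0_r, spow_0. lra.
  - apply secant_bounds_normalized; rewrite ?(Rabs_right a) in *; lra.
Qed.

Lemma secant_bounds_all a b : secant_bounds q c C a b.
Proof.
  destruct (Rle_dec (Rabs b) (Rabs a)).
  - now apply secant_bounds_abs_le.
  - apply secant_bounds_sym, secant_bounds_abs_le. lra.
Qed.

End SecantBounds.

Lemma spow_secant_bounds q : 0 < q ->
  exists c C, 0 < c /\ 0 < C /\ forall a b, secant_bounds q c C a b.
Proof.
  intro Hq. destruct (one_sub_spow_comparable q Hq) as (c & C & Hc & HC & Hbounds).
  exists c, C. split; [|split]; try assumption. now apply secant_bounds_all.
Qed.

Lemma exp_le_compat x y : x <= y -> exp x <= exp y.
Proof. intros [Hxy| ->]; [left; now apply exp_increasing | lra]. Qed.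

Lemma Rpower_le_comparable M M' l r : 0 < M -> 0 < M' -> M <= l * M' -> M' <= l * M ->
  Rpower M r <= Rpower l (Rabs r) * Rpower M' r.
Proof.
  intros HM HM' Hle Hge. assert (Hl : 0 < l) by nra.
  unfold Rpower. rewrite <- exp_plus. apply exp_le_compat.
  assert (ln M <= ln l + ln M') by (rewrite <- ln_mult by lra; apply ln_le; lra).
  assert (ln M' <= ln l + ln M) by (rewrite <- ln_mult by lra; apply ln_le; lra).
  destruct (Rle_lt_dec 0 r).
  - rewrite Rabs_right by lra. nra.
  - rewrite Rabs_left by lra. nra.
Qed.

Lemma Rmax_abs_le_shift a b a' b' d : Rabs (a - a') <= d -> Rabs (b - a') <= d ->
  Rmax (Rabs a) (Rabs b) <= Rmax (Rabs a') (Rabs b') + d.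
Proof.
  intros Ha Hb. pose proof (Rmax_l (Rabs a') (Rabs b')).
  pose proof (Rabs_triang_inv a a'). pose proof (Rabs_triang_inv b a').
  apply Rmax_lub; lra.
Qed.

Lemma Rabs_sub_le_2Rmax a b : Rabs (a - b) <= 2 * Rmax (Rabs a) (Rabs b).
Proof.
  pose proof (Rabs_triang a (- b)). rewrite Rabs_Ropp in *.
  pose proof (Rmax_l (Rabs a) (Rabs b)). pose proof (Rmax_r (Rabs a) (Rabs b)).
  unfold Rminus. lra.
Qed.

(* If both pairs have gap at least r and all their points lie within 2 r of each other,
   each maximum is at most the other plus 2 r, which is at most 4 times the other. *)
Lemma secant_weight_comparable q u v u' v' r : 0 < r ->
  r <= Rabs (u - v) -> r <= Rabs (u' - v') ->
  Rabs (u - u') <= 2 * r -> Rabs (v - u') <= 2 * r -> Rabs (v' - u) <= 2 * r ->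
  secant_weight q u v <= Rpower 5 (Rabs (q - 1)) * secant_weight q u' v'.
Proof.
  intros Hr Huv Hu'v' Huu' Hvu' Hv'u.
  pose proof (Rabs_sub_le_2Rmax u v). pose proof (Rabs_sub_le_2Rmax u' v').
  pose proof (Rmax_abs_le_shift u v u' v' _ Huu' Hvu').
  rewrite Rabs_minus_sym in Huu'.
  pose proof (Rmax_abs_le_shift u' v' u v _ Huu' Hv'u).
  apply Rpower_le_comparable; lra.
Qed.

Definition spow_incr (q x t : R) : R := spow q (x + t) - spow q x.

Section SecantComparison.

Variables q c C : R.
Hypothesis hc : 0 < c.
Hypothesis hC : 0 < C.
Hypothesis hsecant : forall a b, secant_bounds q c C a b.

Let L := Rpower 5 (Rabs (q - 1)).

Lemma secant_le_scaled u v u' v' k l :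
  u - v = k * (u' - v') -> secant_weight q u v <= l * secant_weight q u' v' ->
  (u - v) * (spow q u - spow q v) <= C * l * k ^ 2 / c * ((u' - v') * (spow q u' - spow q v')).
Proof.
  intros Hk Hw. destruct (hsecant u v) as [_ Hup]. destruct (hsecant u' v') as [Hlo _].
  assert (Hw' : 0 < secant_weight q u' v') by apply Rpower_gt0.
  assert (Hl : 0 < l) by (pose proof (Rpower_gt0 (Rmax (Rabs u) (Rabs v)) (q - 1)); 
    unfold secant_weight in *; nra).
  assert (Hsq : C * (u - v) ^ 2 * secant_weight q u v
                <= C * l * k ^ 2 / c * (c * (u' - v') ^ 2 * secant_weight q u' v')).
  { replace (C * l * k ^ 2 / c * (c * (u' - v') ^ 2 * secant_weight q u' v'))
      with (C * (u - v) ^ 2 * (l * secant_weight q u' v')) by (rewrite Hk; field; lra).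
    apply Rmult_le_compat_l; [|exact Hw]. apply Rmult_le_pos; [lra | apply pow2_ge_0]. }
  assert (0 <= C * l * k ^ 2 / c) by (apply Rmult_le_pos; [|left; now apply Rinv_0_lt_compat];
    apply Rmult_le_pos; [nra | apply pow2_ge_0]).
  pose proof (Rmult_le_compat_l _ _ _ H Hlo). lra.
Qed.

Lemma spow_incr_double_gain x s :
  0 <= s * (2 * spow_incr q x (2 * s) - (2 + 2 * c / (C * L)) * spow_incr q x s).
Proof.
  destruct (Req_dec s 0) as [-> | Hs]; [lra|].
  assert (HL : 0 < L) by apply Rpower_gt0.
  pose proof (Rabs_pos_lt s Hs).
  assert (Hcmp := secant_le_scaled (x + s) x (x + 2 * s) (x + s) 1 L).
  assert (Hw : secant_weight q (x + s) x <= L * secant_weight q (x + 2 * s) (x + s)).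
  { apply secant_weight_comparable with (r := Rabs s); try lra; split_Rabs; lra. }
  specialize (Hcmp ltac:(ring) Hw).
  unfold spow_incr.
  set (k := 2 * c / (C * L)).
  assert (Hk : 0 < k) by (apply Rdiv_lt_0_compat; nra).
  apply Rmult_le_compat_l with (r := k) in Hcmp; [|lra].
  replace (k * (C * L * 1 ^ 2 / c * ((x + 2 * s - (x + s)) * (spow q (x + 2 * s) - spow q (x + s)))))
    with (2 * (s * (spow q (x + 2 * s) - spow q (x + s)))) in Hcmp by (unfold k; field; lra).
  replace (x + s - x) with s in Hcmp by ring.
  lra.
Qed.

Lemma spow_incr_double_loss x s :
  0 <= s * (4 * C * L / c * spow_incr q x s - 2 * spow_incr q x (2 * s)).
Proof.
  destruct (Req_dec s 0) as [-> | Hs]; [lra|].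
  pose proof (Rabs_pos_lt s Hs).
  assert (Hcmp := secant_le_scaled (x + 2 * s) x (x + s) x 2 L).
  assert (Hw : secant_weight q (x + 2 * s) x <= L * secant_weight q (x + s) x).
  { apply secant_weight_comparable with (r := Rabs s); try lra; split_Rabs; lra. }
  specialize (Hcmp ltac:(ring) Hw).
  unfold spow_incr.
  replace (x + 2 * s - x) with (2 * s) in Hcmp by ring.
  replace (x + s - x) with s in Hcmp by ring.
  replace (C * L * 2 ^ 2 / c) with (4 * C * L / c) in Hcmp by (field; lra).
  lra.
Qed.

Lemma spow_incr_reflect x s :
  0 <= s * (- (C * L / c) * spow_incr q x (- s) - spow_incr q x s).
Proof.
  destruct (Req_dec s 0) as [-> | Hs]; [lra|].
  pose proof (Rabs_pos_lt s Hs).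
  assert (Hcmp := secant_le_scaled (x + s) x (x + - s) x (-1) L).
  assert (Hw : secant_weight q (x + s) x <= L * secant_weight q (x + - s) x).
  { apply secant_weight_comparable with (r := Rabs s); try lra; split_Rabs; lra. }
  specialize (Hcmp ltac:(ring) Hw).
  unfold spow_incr.
  replace (x + - s - x) with (- s) in Hcmp by ring.
  replace (x + s - x) with s in Hcmp by ring.
  replace (C * L * (-1) ^ 2 / c) with (C * L / c) in Hcmp by (field; lra).
  lra.
Qed.

End SecantComparison.

Lemma is_derive_abspow p u : 1 < p -> is_derive (fun t => abspow t p) u (p * spow (p - 1) u).
Proof.
  intro Hp. destruct (Rtotal_order u 0) as [Hu|[-> | Hu]].
  - apply is_derive_ext_loc with (f := fun t => Rpower (- t) p).
    { apply (filter_imp (fun t => t < 0)); [intros t Ht; now rewrite abspow_neg|].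
      now apply (open_lt 0). }
    rewrite spow_neg by lra.
    replace (p * - Rpower (- u) (p - 1)) with (-1 * (p * Rpower (- u) (p - 1))) by ring.
    apply (is_derive_comp (fun t => Rpower t p) Ropp).
    + apply is_derive_Reals, derivable_pt_lim_power. lra.
    + auto_derive; auto.
  - rewrite spow_0, Rmult_0_r. apply is_derive_Reals. intros e He.
    exists (mkposreal _ (Rpower_gt0 e (/ (p - 1)))). intros h Hh0 Hh. simpl in Hh.
    rewrite Rplus_0_l, abspow_0, !Rminus_0_r.
    unfold abspow. destruct (Req_EM_T h 0) as [|_]; [lra|].
    pose proof (Rabs_pos_lt h Hh0) as Hh'.
    replace (Rpower (Rabs h) p / h) with (Rpower (Rabs h) (p - 1) * (Rabs h / h)).
    2:{ replace p with ((p - 1) + 1) at 2 by ring. rewrite Rpower_plus, Rpower_1 by lra.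
        field. lra. }
    rewrite Rabs_mult, Rabs_div, Rabs_Rabsolu, Rabs_right by (try left; try apply Rpower_gt0; lra).
    rewrite Rdiv_diag by lra. rewrite Rmult_1_r.
    replace e with (Rpower (Rpower e (/ (p - 1))) (p - 1))
      by (rewrite Rpower_mult, Rinv_l, Rpower_1; lra).
    apply Rlt_Rpower_l; lra.
  - apply is_derive_ext_loc with (f := fun t => Rpower t p).
    { apply (filter_imp (fun t => 0 < t)); [intros t Ht; now rewrite abspow_pos|].
      now apply (open_gt 0). }
    rewrite spow_pos by lra. apply is_derive_Reals, derivable_pt_lim_power. lra.
Qed.

Lemma fp_0_r p x : fp p x 0 = 0.
Proof. unfold fp. rewrite Rplus_0_r. ring. Qed.

Lemma spow_incr_0_r q x : spow_incr q x 0 = 0.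
Proof. unfold spow_incr. rewrite Rplus_0_r. ring. Qed.

Lemma is_derive_fp p x y : 1 < p ->
  is_derive (fun y => fp p x y) y (p * spow_incr (p - 1) x y).
Proof.
  intro Hp. unfold spow_incr.
  apply (is_derive_ext
    (fun y => abspow (x + y) p - (abspow x p + y * (p * abspow x (p - 1) * sgn x)))).
  { intro t. unfold fp. simpl. ring. }
  replace (p * (spow (p - 1) (x + y) - spow (p - 1) x))
    with (1 * (p * spow (p - 1) (x + y)) - p * abspow x (p - 1) * sgn x)
    by (unfold spow; ring).
  apply (is_derive_minus (fun y => abspow (x + y) p)).
  - apply (is_derive_comp (fun t => abspow t p)); [now apply is_derive_abspow|].
    auto_derive; auto.
  - auto_derive; auto. ring.
Qed.

Lemma nonneg_of_derive_sign (H dH : R -> R) :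
  (forall y, is_derive H y (dH y)) -> H 0 = 0 -> dH 0 = 0 ->
  (forall s, 0 <= s * dH s) -> forall t, 0 <= H t.
Proof.
  intros Hd H0 dH0 Hs t.
  destruct (MVT_gen H 0 t dH) as (m & Hm & Em).
  - intros; apply Hd.
  - intros z _. apply continuity_pt_filterlim, (ex_derive_continuous H z).
    exists (dH z). apply Hd.
  - rewrite H0, !Rminus_0_r in Em. rewrite Em.
    destruct (Req_dec m 0) as [-> | Hm0]; [rewrite dH0; lra|].
    specialize (Hs m).
    unfold Rmin, Rmax in Hm. destruct (Rle_dec 0 t); nra.
Qed.

Lemma fp_combination_nonneg p x al ga be de : 1 < p ->
  (forall s, 0 <= s * (al * ga * spow_incr (p - 1) x (ga * s) - be * de * spow_incr (p - 1) x (de * s))) ->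
  forall y, 0 <= al * fp p x (ga * y) - be * fp p x (de * y).
Proof.
  intros Hp Hsign.
  apply (nonneg_of_derive_sign _
    (fun s => p * (al * ga * spow_incr (p - 1) x (ga * s) - be * de * spow_incr (p - 1) x (de * s)))).
  - intro y.
    replace (p * (al * ga * spow_incr (p - 1) x (ga * y) - be * de * spow_incr (p - 1) x (de * y)))
      with (al * (ga * (p * spow_incr (p - 1) x (ga * y)))
            - be * (de * (p * spow_incr (p - 1) x (de * y)))) by ring.
    apply (is_derive_minus (fun t => al * fp p x (ga * t)) (fun t => be * fp p x (de * t)));
      apply is_derive_scal;
      (apply (is_derive_comp (fun y => fp p x y)); [now apply is_derive_fp | auto_derive; auto; ring]).
  - rewrite !Rmult_0_r, !fp_0_r. ring.
  - rewrite !Rmult_0_r, !spow_incr_0_r. ring.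
  - intro s. specialize (Hsign s).
    replace (s * (p * _)) with (p * (s * (al * ga * spow_incr (p - 1) x (ga * s)
      - be * de * spow_incr (p - 1) x (de * s)))) by ring.
    apply Rmult_le_pos; lra.
Qed.

Theorem lemma6p8 (p : R) (hp1 : 1 < p) :
  (exists Lam : R, 2 < Lam /\ forall x y : R, fp p x (2 * y) >= Lam * fp p x y) /\
  (exists T : R, 0 < T /\ forall x y : R, fp p x (2 * y) <= T * fp p x y) /\
  (exists K : R, 0 < K /\ forall x y : R, fp p x y <= K * fp p x (- y)).
Proof.
  destruct (spow_secant_bounds (p - 1)) as (c & C & Hc & HC & Hsec); [lra|].
  set (L := Rpower 5 (Rabs (p - 1 - 1))).
  assert (HL : 0 < L) by apply Rpower_gt0.
  assert (HcCL : 0 < c / (C * L)) by (apply Rdiv_lt_0_compat; nra).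
  assert (HCLc : 0 < C * L / c) by (apply Rdiv_lt_0_compat; nra).
  split; [|split].
  - exists (2 + 2 * c / (C * L)). split; [unfold Rdiv in *; lra|]. intros x y.
    enough (0 <= 1 * fp p x (2 * y) - (2 + 2 * c / (C * L)) * fp p x (1 * y))
      by (rewrite !Rmult_1_l in *; lra).
    apply fp_combination_nonneg; [assumption|]. intro s. rewrite !Rmult_1_l, !Rmult_1_r.
    now apply spow_incr_double_gain.
  - exists (4 * C * L / c). split; [unfold Rdiv in *; lra|]. intros x y.
    enough (0 <= 4 * C * L / c * fp p x (1 * y) - 1 * fp p x (2 * y))
      by (rewrite !Rmult_1_l in *; lra).
    apply fp_combination_nonneg; [assumption|]. intro s. rewrite !Rmult_1_l, !Rmult_1_r.
    now apply spow_incr_double_loss.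
  - exists (C * L / c). split; [assumption|]. intros x y.
    enough (0 <= C * L / c * fp p x (-1 * y) - 1 * fp p x (1 * y))
      by (replace (-1 * y) with (- y) in * by ring; rewrite !Rmult_1_l in *; lra).
    apply fp_combination_nonneg; [assumption|]. intro s.
    replace (-1 * s) with (- s) by ring. replace (C * L / c * -1) with (- (C * L / c)) by ring.
    rewrite !Rmult_1_l. now apply spow_incr_reflect.
Qed.
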